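(* Let $\varepsilon\in\{1,-1\}$ and put $\epsilon_i=1$ for $i\in\{1,\dots,N\}\setminus\{n+1,n+2\}$ and $\epsilon_{n+1}=\epsilon_{n+2}=\varepsilon$. Then the following four difference operators are equal: \[ \overrightarrow{\prod_{a=1}^n}\bigl(1-z_{\bar a}(u)D\bigr)\cdot\bigl(1-z_{\bar n}(u)z_n(u+1)D^2\bigr)\cdot\overleftarrow{\prod_{a=1}^n}\bigl(1-z_a(u)D\bigr) \] \[ =\overrightarrow{\prod_{a=1}^n}\bigl(z_a(u+n+1-a)-D\bigr)\cdot\bigl(z_{\bar n}(u-1)z_n(u)-D^2\bigr)\cdot\overleftarrow{\prod_{a=1}^n}\bigl(z_{\bar a}(u-n-2+a)-D\bigr) \] \[ =\overleftarrow{\prod_{i=1}^N}\bigl(1-\epsilon_ix_i(u)D\bigr)=-\overrightarrow{\prod_{i=1}^N}\bigl(\epsilon_ix_i(u+n+1-i)-D\bigr). \] In particular $L(u)$ is a polynomial of degree $N$ in $D$ whose coefficients lie in $\mathcal Y$.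
   Context: Fix an integer $n\ge 2$ and put $N=2n+2$. Let $Q_a(u)$ ($1\le a\le n$, $u\in\mathbb C$) be algebraically independent commuting indeterminates, $\mathcal Q=\mathbb Z[Q_a(u)^{\pm1}]_{1\le a\le n,\,u\in\mathbb C}$, and $\mathcal K$ its field of fractions. Put $d_a=1+\delta_{an}$, $Y_a(u)=Q_a(u-\frac{d_a}{2})/Q_a(u+\frac{d_a}{2})$ for $1\le a\le n$, $Y_0(u)=1$, and $\mathcal Y=\mathbb Z[Y_a(u)^{\pm1}]_{1\le a\le n,\,u\in\mathbb C}\subset\mathcal Q$. Let $J=\{1\prec2\prec\cdots\prec n\prec\bar n\prec\cdots\prec\bar2\prec\bar1\}$. For $1\le a\le n$ set $z_a(u)=\frac{Y_a(u+\frac a2)}{Y_{a-1}(u+\frac{a+1}2)}$, $z_{\bar a}(u)=\frac{Y_{a-1}(u+\frac{2n-a+3}2)}{Y_a(u+\frac{2n-a+4}2)}$; set $x_a(u)=z_a(u)$, $x_{2n+3-a}(u)=z_{\bar a}(u)$ for $1\le a\le n$, and $x_{n+1}(u)=-x_{n+2}(u)=\frac{Q_n(u+\frac n2)Q_n(u+\frac{n+4}2)}{Q_n(u+\frac{n+2}2)^2}$. $D$ is the shift operator: difference operators are expressions $\sum_j c_j(u)D^j$ with $c_j(u)\in\mathcal K$, multiplied using $D\,c(u)=c(u+1)\,D$. Write $\overrightarrow{\prod}_{i=1}^kX_i=X_1X_2\cdots X_k$ and $\overleftarrow{\prod}_{i=1}^kX_i=X_k\cdots X_2X_1$. Define $L(u)=\overrightarrow{\prod}_{i=1}^{N}\bigl(x_i(u+n+1-i)-D\bigr)$.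 *)

From mathcomp Require Import all_boot all_order all_algebra.
From mathcomp Require Import complex.
From mathcomp Require Import Rstruct.

Set Implicit Arguments.
Unset Strict Implicit.
Unset Printing Implicit Defensive.

Import Order.TTheory GRing.Theory Num.Theory.
Local Open Scope ring_scope.

Definition CC : numClosedFieldType := complex Rdefinitions.R.

Definition hs (u : CC) (k : int) : CC := u + k%:~R / 2.

Section Defs.
Variable K : fieldType.
Variable n : nat.
(* Q a u : the (invertible) element Q_a(u), used for 1 <= a <= n *)
Variable Q : nat -> CC -> K.

Definition d_ (a : nat) : int := (1 + (a == n))%N%:Z.

Definition Yf (a : nat) (u : CC) : K :=
  if a == 0%N then 1 else Q a (hs u (- d_ a)) / Q a (hs u (d_ a)).

Definition zf (a : nat) (u : CC) : K :=
  Yf a (hs u a%:Z) / Yf a.-1 (hs u (a.+1)%:Z).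

Definition zbf (a : nat) (u : CC) : K :=
  Yf a.-1 (hs u ((2 * n + 3)%:Z - a%:Z)) / Yf a (hs u ((2 * n + 4)%:Z - a%:Z)).

Definition xmid (u : CC) : K :=
  Q n (hs u n%:Z) * Q n (hs u (n + 4)%:Z) / (Q n (hs u (n + 2)%:Z)) ^+ 2.

Definition xf (i : nat) (u : CC) : K :=
  if (i <= n)%N then zf i u
  else if i == n.+1 then xmid u
  else if i == n.+2 then - xmid u
  else zbf (2 * n + 3 - i) u.

Definition epsf (eps : K) (i : nat) : K :=
  if (i == n.+1) || (i == n.+2) then eps else 1.

(* The subring Y = Z[Y_a(u)^{+-1}] of K: smallest subring containing all
   Y_a(u) and Y_a(u)^{-1}, 1 <= a <= n, u in C. *)
Inductive inY : K -> Prop :=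
| inY_Y a v : (1 <= a <= n)%N -> inY (Yf a v)
| inY_Yinv a v : (1 <= a <= n)%N -> inY (Yf a v)^-1
| inY_1 : inY 1
| inY_sub x y : inY x -> inY y -> inY (x - y)
| inY_mul x y : inY x -> inY y -> inY (x * y).

End Defs.

(* A difference operator sum_j c_j(u) D^j is represented by the sequence of its
   coefficient functions [:: c_0; c_1; ...], c_j : CC -> K. *)
Section Dop.
Variable K : fieldType.

Definition dop := seq (CC -> K).

Definition dcoef (p : dop) (j : nat) (u : CC) : K := nth (fun _ => 0) p j u.

Definition dC (c : CC -> K) : dop := [:: c].
Definition dD (k : nat) : dop := rcons (nseq k (fun _ => 0)) (fun _ => 1).

Definition dadd (p q : dop) : dop :=
  mkseq (fun j u => dcoef p j u + dcoef q j u) (maxn (size p) (size q)).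
Definition dopp (p : dop) : dop := map (fun c u => - c u) p.
Definition dsub (p q : dop) : dop := dadd p (dopp q).

(* product, using D c(u) = c(u+1) D:
   (sum_i a_i D^i)(sum_j b_j D^j) = sum_k (sum_{i+j=k} a_i(u) b_j(u+i)) D^k *)
Definition dmul (p q : dop) : dop :=
  mkseq (fun k u => \sum_(i < k.+1) dcoef p i u * dcoef q (k - i) (u + i%:R))
        (size p + size q).-1.

Definition dprod (l : seq dop) : dop := foldr dmul (dC (fun _ => 1)) l.

Definition deq (p q : dop) : Prop := forall j u, dcoef p j u = dcoef q j u.

End Dop.

Definition ish (u : CC) (k : int) : CC := u + k%:~R.

From mathcomp Require Import all_boot all_order all_algebra.
From mathcomp Require Import complex Rstruct.
From mathcomp Require Import zify ring.
From Stdlib Require Import FunctionalExtensionality.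
From Stdlib Require List.
Import List (Forall).
Import Order.TTheory GRing.Theory Num.Theory.
Set Implicit Arguments.
Unset Strict Implicit.
Unset Printing Implicit Defensive.
Local Open Scope ring_scope.

(* A difference operator is determined by its action [dact] on functions [CC -> K]: testing it
   against indicator functions recovers every coefficient, and products act by composition.
   The first two operators are related by a gauge transformation.  With
   [F_k(u) = Y_{k-1}(u + (2n+3-k)/2)] and [G_k(u) = Y_{k-1}(u + (k-1)/2)^-1] one has
     [(1 - z_{bar k}(u) D) F_{k+1} = F_k (z_k(u+n+1-k) - D)],
     [G_{k+1} (1 - z_k(u) D) = (z_{bar k}(u+k-n-2) - D) G_k],
   the quadratic middle factors satisfy the same relation with [F_{n+1}] and [G_{n+1}], and
   [F_1 = G_1 = 1] because [Y_0 = 1].  The third and fourth operators are the first one and minus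
   the second one with the quadratic middle factor split into two linear factors; this works
   because [x_{n+2} = - x_{n+1}], [x_{n+1}(u) x_{n+1}(u+1) = z_{bar n}(u) z_n(u+1)] and
   [eps^2 = 1].  Finally [L] is minus the second operator, whose factors have coefficients in
   [Y], and a product of [N] factors [c - D] has degree [N] and leading coefficient [(-1)^N]. *)

Section ForallSeq.
Variables (T : Type) (P : T -> Prop).

Lemma Forall_cat (s1 s2 : seq T) : Forall P s1 -> Forall P s2 -> Forall P (s1 ++ s2).
Proof. by elim=> [|x s Px _ IH] //= Ps2; constructor; last exact: IH. Qed.

Lemma Forall_rev (s : seq T) : Forall P s -> Forall P (rev s).
Proof.
by elim=> [|x {}s Px _ IH] //; rewrite rev_cons -cats1; apply: Forall_cat => //; constructor.
Qed.

Lemma Forall_map_in (I : eqType) (f : I -> T) (s : seq I) :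
  (forall i, i \in s -> P (f i)) -> Forall P (map f s).
Proof.
elim: s => [|i s IH] Pf //=; constructor; first by apply: Pf; rewrite mem_head.
by apply: IH => j js; apply: Pf; rewrite inE js orbT.
Qed.

End ForallSeq.

Section DifferenceOperators.
Variable K : fieldType.
Implicit Types (p q : dop K) (c f h : CC -> K) (l : seq (dop K)).

Definition dact p f : CC -> K :=
  fun u => \sum_(j < size p) dcoef p j u * f (u + j%:R).

Definition dacts l h : CC -> K := foldr dact h l.

Lemma dcoef_default p j u : (size p <= j)%N -> dcoef p j u = 0.
Proof. by move=> hj; rewrite /dcoef nth_default. Qed.

Lemma sum_ord_support (F : nat -> K) m M : (m <= M)%N ->
  (forall i, (m <= i)%N -> F i = 0) -> \sum_(i < M) F i = \sum_(i < m) F i.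
Proof.
move=> hmM F0; rewrite (big_ord_widen _ F hmM) [RHS]big_mkcond /=.
by apply: eq_bigr => i _; case: ltnP => // /F0.
Qed.

Lemma dact_widen p f u M : (size p <= M)%N ->
  dact p f u = \sum_(j < M) dcoef p j u * f (u + j%:R).
Proof.
move=> hM; rewrite /dact (sum_ord_support (F := fun j => dcoef p j u * f (u + j%:R)) hM) //.
by move=> j /dcoef_default ->; rewrite mul0r.
Qed.

Lemma dcoef_dadd p q j u : dcoef (dadd p q) j u = dcoef p j u + dcoef q j u.
Proof.
rewrite /dadd /dcoef; case: (ltnP j (maxn (size p) (size q))) => hj.
  by rewrite nth_mkseq.
rewrite geq_max in hj; case/andP: hj => hp hq.
by rewrite !nth_default ?size_mkseq ?geq_max ?hp ?hq ?addr0.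
Qed.

Lemma dcoef_dmul p q k u : (k < (size p + size q).-1)%N ->
  dcoef (dmul p q) k u = \sum_(i < k.+1) dcoef p i u * dcoef q (k - i) (u + i%:R).
Proof. by move=> hk; rewrite /dcoef nth_mkseq. Qed.

Lemma dcoef_dopp p j u : dcoef (dopp p) j u = - dcoef p j u.
Proof.
rewrite /dopp /dcoef; case: (ltnP j (size p)) => hj.
  by rewrite (nth_map (fun _ => 0)).
by rewrite !nth_default ?size_map ?oppr0.
Qed.

Lemma dact_dadd p q f : dact (dadd p q) f = fun u => dact p f u + dact q f u.
Proof.
apply: functional_extensionality => u; set M := maxn (size p) (size q).
rewrite (@dact_widen (dadd p q) _ _ M) ?size_mkseq //.
rewrite (@dact_widen p _ _ M) ?leq_maxl // (@dact_widen q _ _ M) ?leq_maxr //.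
by rewrite -big_split; apply: eq_bigr => j _; rewrite dcoef_dadd mulrDl.
Qed.

Lemma dact_dopp p f : dact (dopp p) f = fun u => - dact p f u.
Proof.
apply: functional_extensionality => u; rewrite /dact size_map -sumrN.
by apply: eq_bigr => j _; rewrite dcoef_dopp mulNr.
Qed.

Lemma dact_dsub p q f : dact (dsub p q) f = fun u => dact p f u - dact q f u.
Proof. by rewrite /dsub dact_dadd dact_dopp. Qed.

Lemma dact_dC c f : dact (dC c) f = fun u => c u * f u.
Proof.
by apply: functional_extensionality => u; rewrite /dact big_ord1 /dcoef addr0.
Qed.

Lemma dact_dD k f : dact (dD K k) f = fun u => f (u + k%:R).
Proof.
apply: functional_extensionality => u.
rewrite /dact /dD size_rcons size_nseq big_ord_recr /= big1 ?add0r.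
  by rewrite /dcoef nth_rcons size_nseq ltnn eqxx mul1r.
by move=> j _; rewrite /dcoef nth_rcons size_nseq ltn_ord nth_nseq ltn_ord mul0r.
Qed.

Lemma dact_oppf p f : dact p (fun v => - f v) = fun u => - dact p f u.
Proof.
apply: functional_extensionality => u.
by rewrite /dact -sumrN; apply: eq_bigr => j _; rewrite mulrN.
Qed.

Lemma sum_antidiagonal (G : nat -> nat -> K) M :
  \sum_(k < M) \sum_(i < k.+1) G i (k - i)%N = \sum_(i < M) \sum_(j < M - i) G i j.
Proof.
elim: M => [|M IH]; first by rewrite !big_ord0.
rewrite big_ord_recr /= IH [RHS]big_ord_recr /= subSnn big_ord1.
rewrite [in RHS](eq_bigr (fun i : 'I_M => \sum_(j < M - i) G i j + G i (M - i)%N)).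
  by rewrite big_split /= -addrA big_ord_recr /= subnn.
by move=> i _; rewrite subSn 1?ltnW // big_ord_recr.
Qed.

Lemma sum_triangle_rectangle (G : nat -> nat -> K) m1 m2 :
  (forall i j, (m1 <= i)%N || (m2 <= j)%N -> G i j = 0) ->
  \sum_(i < (m1 + m2).-1) \sum_(j < (m1 + m2).-1 - i) G i j =
  \sum_(i < m1) \sum_(j < m2) G i j.
Proof.
have [-> G0|m2_gt0 G0] := posnP m2.
  by rewrite !big1 // => i _; rewrite big1 // => j _; rewrite G0 // leq0n orbT.
have hm1 : (m1 <= (m1 + m2).-1)%N by lia.
rewrite (sum_ord_support (F := fun i => \sum_(j < (m1 + m2).-1 - i) G i j) hm1) => [|i hi].
  apply: eq_bigr => i _; apply: (sum_ord_support (F := G i)) => [|j hj].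
    by have := ltn_ord i; lia.
  by apply: G0; rewrite hj orbT.
by rewrite big1 // => j _; rewrite G0 ?hi.
Qed.

Lemma dact_dmul p q f : dact (dmul p q) f = dact p (dact q f).
Proof.
apply: functional_extensionality => u; rewrite /dact /dmul size_mkseq.
set G := fun i j => dcoef p i u * dcoef q j (u + i%:R) * f (u + i%:R + j%:R).
transitivity (\sum_(k < (size p + size q).-1) \sum_(i < k.+1) G i (k - i)%N).
  apply: eq_bigr => k _; rewrite dcoef_dmul // mulr_suml.
  apply: eq_bigr => i _; rewrite /G -addrA -natrD subnKC //.
  by rewrite -ltnS.
rewrite sum_antidiagonal sum_triangle_rectangle.
  apply: eq_bigr => i _; rewrite mulr_sumr.
  by apply: eq_bigr => j _; rewrite /G mulrA.
by move=> i j /orP [] /dcoef_default hij; rewrite /G hij ?mulr0 !mul0r.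
Qed.

Lemma dact_one f : dact (dC (fun _ => 1)) f = f.
Proof. by rewrite dact_dC; apply: functional_extensionality => u; rewrite mul1r. Qed.

Lemma dact_dprod l h : dact (dprod l) h = dacts l h.
Proof. by elim: l => [|X l IH] /=; rewrite ?dact_one // dact_dmul IH. Qed.

Lemma dacts_cat l1 l2 h : dacts (l1 ++ l2) h = dacts l1 (dacts l2 h).
Proof. exact: foldr_cat. Qed.

Lemma dacts_rcons l X h : dacts (rcons l X) h = dacts l (dact X h).
Proof. by rewrite -cats1 dacts_cat. Qed.

Lemma dacts_oppf l f : dacts l (fun v => - f v) = fun u => - dacts l f u.
Proof. by elim: l => [|X l IH] //=; rewrite IH dact_oppf. Qed.

Lemma deq_dact p q : (forall h, dact p h = dact q h) -> deq p q.
Proof.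
move=> Epq j u; pose h (v : CC) : K := if v == u + j%:R then 1 else 0.
suff dact_h r : dact r h u = dcoef r j u by rewrite -!dact_h Epq.
have hj : (j < maxn (size r) j.+1)%N by rewrite leq_maxr.
rewrite (@dact_widen r _ _ (maxn (size r) j.+1)) ?leq_maxl //.
rewrite (bigD1 (Ordinal hj)) //= /h eqxx mulr1 big1 ?addr0 // => i ij.
case: eqP; last by rewrite mulr0.
by move/addrI/eqP; rewrite eqr_nat => /eqP eij; case/eqP: ij; apply: val_inj.
Qed.

Lemma dact_1BCD c k f :
  dact (dsub (dC (fun _ => 1)) (dmul (dC c) (dD K k))) f =
  fun u => f u - c u * f (u + k%:R).
Proof. by rewrite dact_dsub dact_one dact_dmul dact_dD dact_dC. Qed.

Lemma dact_CBD c k f :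
  dact (dsub (dC c) (dD K k)) f = fun u => c u * f u - f (u + k%:R).
Proof. by rewrite dact_dsub dact_dD dact_dC. Qed.

End DifferenceOperators.

Section ProductsOfFactors.
Variable K : fieldType.
Implicit Types (p q X : dop K) (c : CC -> K) (l : seq (dop K)).

Definition dlinear X := size X = 2%N /\ forall u, dcoef X 1 u = -1.

Lemma dlinear_CBD c : dlinear (dsub (dC c) (dD K 1)).
Proof.
split; first by rewrite size_mkseq size_map /dD size_rcons size_nseq.
by move=> u; rewrite dcoef_dadd dcoef_dopp /dcoef /= add0r.
Qed.

Lemma size_dprod_dlinear l : Forall dlinear l -> size (dprod l) = (size l).+1.
Proof. by elim=> [|X {}l [sX _] _ IH] //=; rewrite size_mkseq IH sX. Qed.

Lemma lead_dprod_dlinear l u :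
  Forall dlinear l -> dcoef (dprod l) (size l) u = (-1) ^+ size l.
Proof.
move=> hl; elim: hl u => [|X {}l [sX X1] hl IH] u; first by [].
have sl := size_dprod_dlinear hl.
change (dcoef (dmul X (dprod l)) (size l).+1 u = (-1) ^+ (size l).+1).
rewrite dcoef_dmul ?sl ?sX // !big_ord_recl big1 => [|i _]; last first.
  by rewrite dcoef_default ?sX ?mul0r.
rewrite subn0 (@dcoef_default _ (dprod l)) ?sl // mulr0 add0r addr0 X1 subn1 /=.
by rewrite IH exprS mulN1r.
Qed.

Section CoefficientsInSubring.
Variable S : K -> Prop.
Hypothesis S1 : S 1.
Hypothesis SB : forall x y, S x -> S y -> S (x - y).
Hypothesis SM : forall x y, S x -> S y -> S (x * y).

Let S0 : S 0. Proof. by rewrite -(subrr 1); apply: SB. Qed.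
Let SN x : S x -> S (- x). Proof. by move=> Sx; rewrite -sub0r; apply: SB. Qed.
Let SD x y : S x -> S y -> S (x + y).
Proof. by move=> Sx Sy; rewrite -(opprK y); apply/SB/SN. Qed.

Definition dcoef_in p := forall j u, S (dcoef p j u).

Lemma dcoef_in_dC c : (forall u, S (c u)) -> dcoef_in (dC c).
Proof. by move=> Sc [|j] u; rewrite /dcoef /= ?nth_nil. Qed.

Lemma dcoef_in_dD k : dcoef_in (dD K k).
Proof.
move=> j u; rewrite /dcoef /dD nth_rcons size_nseq nth_nseq.
by case: ltngtP.
Qed.

Lemma dcoef_in_dopp p : dcoef_in p -> dcoef_in (dopp p).
Proof. by move=> Sp j u; rewrite dcoef_dopp; apply: SN. Qed.

Lemma dcoef_in_dsub p q : dcoef_in p -> dcoef_in q -> dcoef_in (dsub p q).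
Proof. by move=> Sp Sq j u; rewrite dcoef_dadd dcoef_dopp; apply/SD/SN. Qed.

Lemma dcoef_in_dmul p q : dcoef_in p -> dcoef_in q -> dcoef_in (dmul p q).
Proof.
move=> Sp Sq k u; case: (ltnP k (size p + size q).-1) => hk; last first.
  by rewrite dcoef_default ?size_mkseq.
rewrite dcoef_dmul //.
by apply: (big_ind S) => // i _; apply: SM.
Qed.

Lemma dcoef_in_dprod l : Forall dcoef_in l -> dcoef_in (dprod l).
Proof.
elim=> [|X {}l SX _ IH] /=; last exact: dcoef_in_dmul.
exact: dcoef_in_dC.
Qed.

End CoefficientsInSubring.

End ProductsOfFactors.

Section HalfShifts.
Implicit Types (u : CC) (e k : int).

Let two_neq0 : (2 : CC) != 0. Proof. by rewrite pnatr_eq0. Qed.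

Lemma hs_congr u (e e' : int) : e = e' -> hs u e = hs u e'.
Proof. by move->. Qed.

Lemma hs_ish u k e : hs (ish u k) e = hs u (2 * k + e).
Proof. by rewrite /hs /ish intrD intrM; field. Qed.

Lemma hs_addn u (m : nat) e : hs (u + m%:R) e = hs u (2 * m%:Z + e).
Proof. by rewrite /hs intrD intrM; field. Qed.

Lemma hs_hs u e (e' : int) : hs (hs u e) e' = hs u (e + e').
Proof. by rewrite /hs intrD; field. Qed.

End HalfShifts.

(* Rewrite the arguments [hs u e] of the goal that are equal as integers to a common form, so that
   [field] treats them as the same atom. *)
Ltac merge_hs :=
  repeat match goal with
  | |- context [hs ?u ?e1] =>
    match goal with
    | |- context [hs u ?e2] =>
      assert_fails (constr_eq e1 e2); rewrite (@hs_congr u e2 e1); last by lia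
    end
  end.

Section QSystem.
Variables (K : fieldType) (n : nat) (Q : nat -> CC -> K).
Hypothesis n_gt0 : (0 < n)%N.
Hypothesis Q_neq0 : forall a u, (1 <= a <= n)%N -> Q a u != 0.

Lemma Yf_neq0 a v : (a <= n)%N -> Yf n Q a v != 0.
Proof.
move=> an; rewrite /Yf; case: ifPn => [_|a0]; first exact: oner_neq0.
by rewrite mulf_neq0 ?invr_eq0 ?Q_neq0 // an andbT lt0n.
Qed.

Lemma Yf_top v : Yf n Q n v = Q n (hs v (-2)) / Q n (hs v 2).
Proof. by rewrite /Yf /d_ eqxx; case: eqP => // n0; move: n_gt0; rewrite n0. Qed.

Ltac field_Y :=
  field; repeat (apply/andP; split); first [apply: Yf_neq0 | apply: Q_neq0]; lia.

Definition gaugeL k u := Yf n Q k.-1 (hs u ((2 * n + 3)%N%:Z - k%:Z)).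
Definition gaugeR k u := (Yf n Q k.-1 (hs u (k%:Z - 1)))^-1.

Lemma gaugeL1 u : gaugeL 1 u = 1. Proof. by []. Qed.
Lemma gaugeR1 u : gaugeR 1 u = 1. Proof. exact: invr1. Qed.

Section Step.
Variable k : nat.
Hypothesis k_range : (1 <= k <= n)%N.

Lemma gaugeL_succ u : gaugeL k.+1 u = gaugeL k u * zf n Q k (ish u (n.+1%:Z - k%:Z)).
Proof. by rewrite /gaugeL /zf !hs_ish /=; merge_hs; field_Y. Qed.

Lemma zbf_gaugeL u : zbf n Q k u * gaugeL k.+1 (u + 1%:R) = gaugeL k u.
Proof. by rewrite /gaugeL /zbf hs_addn /=; merge_hs; field_Y. Qed.

Lemma gaugeR_succ u : gaugeR k.+1 u = zbf n Q k (ish u (k%:Z - n.+2%:Z)) * gaugeR k u.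
Proof. by rewrite /gaugeR /zbf !hs_ish /=; merge_hs; field_Y. Qed.

Lemma gaugeR_zf u : gaugeR k.+1 u * zf n Q k u = gaugeR k (u + 1%:R).
Proof. by rewrite /gaugeR /zf hs_addn /=; merge_hs; field_Y. Qed.

End Step.

Lemma gauge_mid u :
  gaugeL n.+1 u * (zbf n Q n (ish u (-1)) * zf n Q n u) * gaugeR n.+1 u = 1.
Proof. by rewrite /gaugeL /gaugeR /zf /zbf !hs_ish /=; merge_hs; field_Y. Qed.

Lemma gauge_mid_shift u :
  gaugeL n.+1 u * gaugeR n.+1 (u + 2%:R) = zbf n Q n u * zf n Q n (ish u 1).
Proof. by rewrite /gaugeL /gaugeR /zf /zbf hs_addn !hs_ish /=; merge_hs; field_Y. Qed.

Lemma xmid_mul_succ u :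
  xmid n Q u * xmid n Q (u + 1%:R) = zbf n Q n u * zf n Q n (ish u 1).
Proof.
rewrite /xmid /zf /zbf !Yf_top !hs_addn ?hs_ish !hs_hs /=; merge_hs; field_Y.
Qed.

End QSystem.

Section Gauge.
Variables (K : fieldType) (n : nat) (Q : nat -> CC -> K).
Hypothesis n_gt0 : (0 < n)%N.
Hypothesis Q_neq0 : forall a u, (1 <= a <= n)%N -> Q a u != 0.
Implicit Types (h X : CC -> K) (a k m : nat).

Notation d1 := (dC (fun _ : CC => 1 : K)).

Definition Azb a := dsub d1 (dmul (dC (zbf n Q a)) (dD K 1)).
Definition Amid := dsub d1 (dmul (dC (fun u => zbf n Q n u * zf n Q n (ish u 1))) (dD K 2)).
Definition Az a := dsub d1 (dmul (dC (zf n Q a)) (dD K 1)).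
Definition Bz a := dsub (dC (fun u => zf n Q a (ish u (n.+1%:Z - a%:Z)))) (dD K 1).
Definition Bmid := dsub (dC (fun u => zbf n Q n (ish u (-1)) * zf n Q n u)) (dD K 2).
Definition Bzb a := dsub (dC (fun u => zbf n Q a (ish u (a%:Z - n.+2%:Z)))) (dD K 1).

Definition Aops k m := map Azb (iota k m) ++ Amid :: rev (map Az (iota k m)).
Definition Bops k m := map Bz (iota k m) ++ Bmid :: rev (map Bzb (iota k m)).

Lemma dact_Azb_gauge k X : (1 <= k <= n)%N ->
  dact (Azb k) (fun v => gaugeL n Q k.+1 v * X v) =
  fun u => gaugeL n Q k u * dact (Bz k) X u.
Proof.
move=> hk; rewrite dact_1BCD dact_CBD; apply: functional_extensionality => u.
by rewrite gaugeL_succ // mulrA zbf_gaugeL //; ring.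
Qed.

Lemma dact_Az_gauge k h : (1 <= k <= n)%N ->
  (fun v => gaugeR n Q k.+1 v * dact (Az k) h v) =
  dact (Bzb k) (fun v => gaugeR n Q k v * h v).
Proof.
move=> hk; rewrite dact_1BCD dact_CBD; apply: functional_extensionality => u.
by rewrite mulrBr -gaugeR_zf // gaugeR_succ //; ring.
Qed.

Lemma dact_Amid_gauge h :
  dact Amid h =
  fun u => gaugeL n Q n.+1 u * dact Bmid (fun v => gaugeR n Q n.+1 v * h v) u.
Proof.
rewrite dact_1BCD dact_CBD; apply: functional_extensionality => u.
rewrite -(gauge_mid_shift n_gt0 Q_neq0) -{1}[h u]mul1r -(gauge_mid n_gt0 Q_neq0 u); ring.
Qed.

Lemma dacts_Aops_gauge m k h : (k + m = n.+1)%N -> (1 <= k)%N ->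
  dacts (Aops k m) h =
  fun u => gaugeL n Q k u * dacts (Bops k m) (fun v => gaugeR n Q k v * h v) u.
Proof.
elim: m k h => [|m IH] k h hkm k_gt0.
  by move: hkm; rewrite addn0 => ->; exact: dact_Amid_gauge.
have hk : (1 <= k <= n)%N by lia.
rewrite /Aops /Bops /= !rev_cons -!rcons_cons -!rcons_cat !dacts_rcons.
by rewrite IH 1?addSnnS // dact_Az_gauge // dact_Azb_gauge.
Qed.

Lemma dacts_Aops_Bops h : dacts (Aops 1 n) h = dacts (Bops 1 n) h.
Proof.
rewrite dacts_Aops_gauge ?add1n //; apply: functional_extensionality => u.
rewrite gaugeL1 mul1r; congr dacts; apply: functional_extensionality => v.
by rewrite gaugeR1 mul1r.
Qed.

End Gauge.

Lemma iota_middle n : iota 1 (2 * n + 2) = iota 1 n ++ n.+1 :: n.+2 :: iota n.+3 n.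
Proof.
have -> : (2 * n + 2 = n + (2 + n))%N by lia.
by rewrite !iotaD /= add1n addn2.
Qed.

Lemma rev_iota a m : rev (iota a m) = map (fun i => a + m - i)%N (iota 1 m).
Proof.
elim: m => [|m IH] //; rewrite -addn1 iotaD rev_cat /= IH addn1 /=.
rewrite -(addn1 1) iotaDl -map_comp; congr (_ :: _); first by lia.
by apply: eq_map => i /=; lia.
Qed.

Section Relabelling.
Variables (K : fieldType) (n : nat) (Q : nat -> CC -> K).
Implicit Types (eps : K) (i : nat) (u : CC).

Lemma xf_low i u : (1 <= i <= n)%N -> xf n Q i u = zf n Q i u.
Proof. by case/andP => _ h; rewrite /xf h. Qed.

Lemma xf_high i u : (n.+3 <= i)%N -> xf n Q i u = zbf n Q (2 * n + 3 - i) u.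
Proof.
by move=> h; rewrite /xf ifF 1?ifF 1?ifF //; apply/negbTE; lia.
Qed.

Lemma xf_n1 u : xf n Q n.+1 u = xmid n Q u.
Proof. by rewrite /xf ltnn eqxx. Qed.

Lemma xf_n2 u : xf n Q n.+2 u = - xmid n Q u.
Proof. by rewrite /xf ifF 1?ifF ?eqxx //; apply/negbTE; lia. Qed.

Lemma epsf_other eps i : i != n.+1 -> i != n.+2 -> epsf n eps i = 1.
Proof. by move=> h1 h2; rewrite /epsf (negbTE h1) (negbTE h2). Qed.

Lemma epsf_n1 eps : epsf n eps n.+1 = eps. Proof. by rewrite /epsf eqxx. Qed.
Lemma epsf_n2 eps : epsf n eps n.+2 = eps. Proof. by rewrite /epsf eqxx orbT. Qed.

Lemma epsf1 i : epsf n (1 : K) i = 1. Proof. by rewrite /epsf; case: ifP. Qed.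

End Relabelling.

Section Reorganisation.
Variables (K : fieldType) (n : nat) (Q : nat -> CC -> K).
Hypothesis n_gt0 : (0 < n)%N.
Hypothesis Q_neq0 : forall a u, (1 <= a <= n)%N -> Q a u != 0.
Variable eps : K.
Hypothesis eps2 : eps * eps = 1.
Implicit Types (a i : nat) (g h : CC -> K).

Definition Cfac i :=
  dsub (dC (fun _ => 1)) (dmul (dC (fun u => epsf n eps i * xf n Q i u)) (dD K 1)).
Definition Efac i :=
  dsub (dC (fun u => epsf n eps i * xf n Q i (ish u (n.+1%:Z - i%:Z)))) (dD K 1).

Lemma Cfac_low a : (1 <= a <= n)%N -> Cfac a = Az n Q a.
Proof.
move=> ha; congr (dsub _ (dmul (dC _) _)); apply: functional_extensionality => u.
by rewrite epsf_other ?mul1r ?xf_low //; lia.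
Qed.

Lemma Cfac_high a : (1 <= a <= n)%N -> Cfac (2 * n + 3 - a) = Azb n Q a.
Proof.
move=> ha; congr (dsub _ (dmul (dC _) _)); apply: functional_extensionality => u.
rewrite epsf_other ?mul1r ?xf_high; try lia.
by congr zbf; lia.
Qed.

Lemma Efac_low a : (1 <= a <= n)%N -> Efac a = Bz n Q a.
Proof.
move=> ha; congr (dsub (dC _) _); apply: functional_extensionality => u.
by rewrite epsf_other ?mul1r ?xf_low //; lia.
Qed.

Lemma Efac_high a : (1 <= a <= n)%N -> Efac (2 * n + 3 - a) = Bzb n Q a.
Proof.
move=> ha; congr (dsub (dC _) _); apply: functional_extensionality => u.
rewrite epsf_other ?mul1r ?xf_high; try lia.
by congr (zbf _ _ _ (ish u _)); lia.
Qed.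

Lemma dact_Cmid g : dact (Cfac n.+2) (dact (Cfac n.+1) g) = dact (Amid n Q) g.
Proof.
rewrite !dact_1BCD; apply: functional_extensionality => u.
rewrite epsf_n1 epsf_n2 !xf_n1 xf_n2 -xmid_mul_succ //.
have -> : u + 1%:R + 1%:R = u + 2%:R by rewrite -addrA -natrD.
transitivity (g u - eps * eps * (xmid n Q u * xmid n Q (u + 1%:R)) * g (u + 2%:R)).
  by ring.
by rewrite eps2 mul1r.
Qed.

Lemma dact_Emid g :
  dact (Efac n.+1) (dact (Efac n.+2) g) = fun u => - dact (Bmid n Q) g u.
Proof.
rewrite !dact_CBD; apply: functional_extensionality => u.
rewrite epsf_n1 epsf_n2 !xf_n1 !xf_n2 subrr.
have -> : n.+1%:Z - n.+2%:Z = -1 by lia.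
have -> : ish u 0 = u by rewrite /ish addr0.
have -> : ish (u + 1%:R) (-1) = u by rewrite /ish; ring.
have -> : u + 1%:R + 1%:R = u + 2%:R by rewrite -addrA -natrD.
have := xmid_mul_succ n_gt0 Q_neq0 (ish u (-1)).
have -> : ish u (-1) + 1%:R = u by rewrite /ish; ring.
have -> : ish (ish u (-1)) 1 = u by rewrite /ish; ring.
move <-.
transitivity (- (eps * eps * xmid n Q (ish u (-1)) * xmid n Q u * g u - g (u + 2%:R))).
  by ring.
by rewrite eps2 mul1r.
Qed.

Lemma dacts_Cops h :
  dacts (rev (map Cfac (iota 1 (2 * n + 2)))) h = dacts (Aops n Q 1 n) h.
Proof.
rewrite iota_middle map_cat rev_cat /= !rev_cons -!cats1 -!catA !dacts_cat /=.
rewrite dact_Cmid; congr (dacts _ (dact _ (dacts _ _))).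
  rewrite -map_rev rev_iota -map_comp; apply/eq_in_map => a.
  by rewrite mem_iota => ha /=; rewrite -Cfac_high; [congr Cfac | ]; lia.
by congr rev; apply/eq_in_map => a; rewrite mem_iota => ha; apply: Cfac_low; lia.
Qed.

Lemma dacts_Eops h :
  dacts (map Efac (iota 1 (2 * n + 2))) h = fun u => - dacts (Bops n Q 1 n) h u.
Proof.
rewrite iota_middle map_cat dacts_cat /= dact_Emid dacts_oppf /Bops dacts_cat /=.
apply: functional_extensionality => u; congr (- dacts _ (dact _ (dacts _ _)) u).
  by apply/eq_in_map => a; rewrite mem_iota => ha; apply: Efac_low; lia.
rewrite -map_rev rev_iota -map_comp -(addn1 n.+2) iotaDl -map_comp.
by apply/eq_in_map => a; rewrite mem_iota => ha /=; rewrite -Efac_high; [congr Efac|]; lia.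
Qed.

End Reorganisation.

Section YCoefficients.
Variables (K : fieldType) (n : nat) (Q : nat -> CC -> K).

Lemma inY_zf a v : (1 <= a <= n)%N -> inY n Q (zf n Q a v).
Proof.
move=> ha; apply: inY_mul; first exact: inY_Y.
case: a ha => [|[|a]] ha //; first by rewrite /Yf invr1; exact: inY_1.
by apply: inY_Yinv; lia.
Qed.

Lemma inY_zbf a v : (1 <= a <= n)%N -> inY n Q (zbf n Q a v).
Proof.
move=> ha; apply: inY_mul; last exact: inY_Yinv.
case: a ha => [|[|a]] ha //; first exact: inY_1.
by apply: inY_Y; lia.
Qed.

Let Y1 := @inY_1 K n Q.
Let YB := @inY_sub K n Q.
Let YM := @inY_mul K n Q.

Lemma dcoef_inY_dprod_Bops : (0 < n)%N -> dcoef_in (inY n Q) (dprod (Bops n Q 1 n)).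
Proof.
move=> n_gt0.
have inY_CBD c k : (forall u, inY n Q (c u)) -> dcoef_in (inY n Q) (dsub (dC c) (dD K k)).
  by move=> hc; apply: (dcoef_in_dsub Y1 YB); [exact: dcoef_in_dC | exact: dcoef_in_dD].
apply: (dcoef_in_dprod Y1 YB YM); apply: Forall_cat; last constructor.
- by apply: Forall_map_in => a; rewrite mem_iota => ha; apply: inY_CBD => u; apply: inY_zf; lia.
- by apply: inY_CBD => u; apply: inY_mul; [apply: inY_zbf | apply: inY_zf]; lia.
apply/Forall_rev/Forall_map_in => a; rewrite mem_iota => ha.
by apply: inY_CBD => u; apply: inY_zbf; lia.
Qed.

End YCoefficients.

Theorem mainTheorem1 (K : fieldType) (n : nat) (Q : nat -> CC -> K)
    (hn : (2 <= n)%N)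
    (hQ : forall a u, (1 <= a <= n)%N -> Q a u != 0)
    (eps : K) (heps : eps = 1 \/ eps = -1) :
  let N := (2 * n + 2)%N in
  let one := dC (fun _ : CC => 1 : K) in
  let A :=
    dprod ([seq dsub one (dmul (dC (zbf n Q a)) (dD K 1)) | a <- iota 1 n]
        ++ [:: dsub one (dmul (dC (fun u => zbf n Q n u * zf n Q n (ish u 1))) (dD K 2))]
        ++ rev [seq dsub one (dmul (dC (zf n Q a)) (dD K 1)) | a <- iota 1 n]) in
  let B :=
    dprod ([seq dsub (dC (fun u => zf n Q a (ish u (n.+1%:Z - a%:Z)))) (dD K 1)
              | a <- iota 1 n]
        ++ [:: dsub (dC (fun u => zbf n Q n (ish u (-1)) * zf n Q n u)) (dD K 2)]
        ++ rev [seq dsub (dC (fun u => zbf n Q a (ish u (a%:Z - n.+2%:Z)))) (dD K 1)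
                  | a <- iota 1 n]) in
  let C :=
    dprod (rev [seq dsub one (dmul (dC (fun u => epsf n eps i * xf n Q i u)) (dD K 1))
                  | i <- iota 1 N]) in
  let E :=
    dprod [seq dsub (dC (fun u => epsf n eps i * xf n Q i (ish u (n.+1%:Z - i%:Z)))) (dD K 1)
             | i <- iota 1 N] in
  let L :=
    dprod [seq dsub (dC (fun u => xf n Q i (ish u (n.+1%:Z - i%:Z)))) (dD K 1)
             | i <- iota 1 N] in
  (deq A B /\ deq B C /\ deq C (dopp E)) /\
  ((forall j u, (N < j)%N -> dcoef L j u = 0) /\
   (forall u, dcoef L N u != 0) /\
   (forall j u, inY n Q (dcoef L j u))).
Proof.
move=> N one A B C E L.
have n_gt0 : (0 < n)%N by apply: leq_trans hn.
have eps2 : eps * eps = 1 by case: heps => ->; rewrite ?mulrNN mulr1.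
have actB h : dact B h = dacts (Bops n Q 1 n) h := dact_dprod _ h.
have actA h : dact A h = dact B h by rewrite dact_dprod actB dacts_Aops_Bops.
have actC h : dact C h = dact B h.
  by rewrite dact_dprod (dacts_Cops n_gt0 hQ eps2) dacts_Aops_Bops.
have actE h : dact E h = fun u => - dact B h u.
  by rewrite dact_dprod (dacts_Eops n_gt0 hQ eps2) actB.
pose L1 := map (Efac n Q (1 : K)) (iota 1 N).
have L_L1 : L = dprod L1.
  congr dprod; apply: eq_map => i; congr (dsub (dC _) _).
  by apply: functional_extensionality => u; rewrite epsf1 mul1r.
have L1_lin : Forall (@dlinear K) L1 by apply: Forall_map_in => i _; exact: dlinear_CBD.
have size_L1 : size L1 = N by rewrite size_map size_iota.
split; [split; [|split] | split; [|split]].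
- exact: deq_dact.
- by apply: deq_dact => h; rewrite actC.
- apply: deq_dact => h; rewrite dact_dopp actC actE.
  by apply: functional_extensionality => u; rewrite opprK.
- by move=> j u hj; rewrite L_L1 dcoef_default // size_dprod_dlinear // size_L1.
- by move=> u; rewrite L_L1 -size_L1 lead_dprod_dlinear // expf_neq0 // oppr_eq0 oner_eq0.
have L_B : deq L (dopp B).
  apply: deq_dact => h; rewrite dact_dopp L_L1 dact_dprod.
  by rewrite (dacts_Eops n_gt0 hQ (mulr1 1)) actB.
move=> j u; rewrite L_B; apply: dcoef_in_dopp; [exact: inY_1 | exact: inY_sub |].
exact: dcoef_inY_dprod_Bops.
Qed.
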